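(* Let $S$ be a finite set of endomorphisms of $\mathbb{P}^N$, all of degree at least $2$, let $C_S:=\max\{\sup_{\phi\in S}C(\phi),1\}$, let $K/\mathbb{Q}$ be a finite extension over which every map in $S$ is defined, let $P\in\mathbb{P}^N(K)$, and let $F_{P,S}:=\{Q\in\mathrm{Orb}_S(P):h(Q)\leq 2C_S\}$. Then $\phi(\mathrm{Orb}_S(P)\setminus F_{P,S})\subseteq\mathrm{Orb}_S(P)\setminus F_{P,S}$ for all $\phi\in S$.
   Context: $h$ is the absolute Weil height on $\mathbb{P}^N(\overline{\mathbb{Q}})$. For an endomorphism $\phi$ of degree $d_\phi$, $C(\phi)=\sup_{Q\in\mathbb{P}^N(\overline{\mathbb{Q}})}|h(\phi(Q))-d_\phi h(Q)|$. $\mathrm{Orb}_S(P)=\{\rho(P):\rho\in M_S\}$, where $M_S$ is the monoid of the identity and all finite compositions of elements of $S$. *)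

From HB Require Import structures.
From mathcomp Require Import all_boot all_order all_algebra.
From mathcomp Require Import all_classical all_reals ereal.
Set Implicit Arguments. Unset Strict Implicit. Unset Printing Implicit Defensive.
Import Order.TTheory GRing.Theory Num.Theory.
Local Open Scope classical_set_scope.
Local Open Scope ring_scope.

(* Abstract setting: X plays the role of P^N(Qbar), h : X -> R the height,
   deg : (X -> X) -> nat the degree of an endomorphism. *)

Inductive in_monoid (X : Type) (S : set (X -> X)) : (X -> X) -> Prop :=
  | monoid_id : in_monoid S id
  | monoid_comp rho phi : in_monoid S rho -> S phi -> in_monoid S (phi \o rho).

Definition orbS (X : Type) (S : set (X -> X)) (P : X) : set X :=
  [set rho P | rho in in_monoid S].

Definition Cconst (R : realType) (X : Type) (h : X -> R) (deg : (X -> X) -> nat)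
    (phi : X -> X) : \bar R :=
  ereal_sup [set (`| h (phi Q) - (deg phi)%:R * h Q |)%:E | Q in [set: X]].

Definition CS (R : realType) (X : Type) (h : X -> R) (deg : (X -> X) -> nat)
    (S : set (X -> X)) : \bar R :=
  Order.max (ereal_sup [set Cconst h deg phi | phi in S]) 1%E.

Definition FPS (R : realType) (X : Type) (h : X -> R) (deg : (X -> X) -> nat)
    (S : set (X -> X)) (P : X) : set X :=
  [set Q | orbS S P Q /\ ((h Q)%:E <= 2%:E * CS h deg S)%E].

From HB Require Import structures.
From mathcomp Require Import all_boot all_order all_algebra.
From mathcomp Require Import all_classical all_reals ereal.
From mathcomp Require Import lra.
Import Order.TTheory GRing.Theory Num.Theory.
Local Open Scope classical_set_scope.
Local Open Scope ring_scope.

(* If h(Q) > 2 C_S then C_S is finite, |h(phi Q) - d h(Q)| <= C_S and d >= 2 give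
   h(phi Q) >= 2 h(Q) - C_S > h(Q) > 2 C_S, while phi Q stays in the orbit. *)

Lemma orbS_comp (X : Type) (S : set (X -> X)) (P Q : X) (phi : X -> X) :
  S phi -> orbS S P Q -> orbS S P (phi Q).
Proof.
by move=> Sphi [rho Mrho <-]; exists (phi \o rho) => //; apply: monoid_comp.
Qed.

Lemma ltr_dist_mul (R : realFieldType) (a b c d : R) :
  0 <= c -> 2 <= d -> `|b - d * a| <= c -> c < a -> a < b.
Proof.
move=> c_ge0 d_ge2 /ler_normlP[dist_lo _] c_lt_a.
have a_ge0 : 0 <= a by lra.
have : 2 * a <= d * a by rewrite ler_wpM2r.
lra.
Qed.

Section HeightConstants.

Variables (R : realType) (X : Type) (h : X -> R) (deg : (X -> X) -> nat).
Variable S : set (X -> X).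

Lemma Cconst_ub (phi : X -> X) (Q : X) :
  ((`| h (phi Q) - (deg phi)%:R * h Q |)%:E <= Cconst h deg phi)%E.
Proof. by apply: ereal_sup_ubound; exists Q. Qed.

Lemma Cconst_le_CS {phi : X -> X} : S phi -> (Cconst h deg phi <= CS h deg S)%E.
Proof.
move=> Sphi; apply: (@le_trans _ _ (ereal_sup [set Cconst h deg phi | phi in S])).
  by apply: ereal_sup_ubound; exists phi.
by rewrite /CS le_max lexx.
Qed.

Lemma CS_ge1 : (1 <= CS h deg S)%E.
Proof. by rewrite /CS le_max lexx orbT. Qed.

Lemma height_lt_image {phi : X -> X} {Q : X} :
  S phi -> (2 <= deg phi)%N -> (2%:E * CS h deg S < (h Q)%:E)%E -> h Q < h (phi Q).
Proof.
move=> Sphi deg_ge2.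
have := le_trans (Cconst_ub phi Q) (Cconst_le_CS Sphi).
have := CS_ge1; case: (CS h deg S) => [c | | ] //; last first.
  by move=> _ _; rewrite mulry gtr0_sg // mul1e ltNge leey.
rewrite !lee_fin -EFinM lte_fin => c_ge1 dist_le hQ_gt.
apply: (@ltr_dist_mul R _ _ c (deg phi)%:R) => //; first lra.
- by rewrite (ler_nat R 2).
- lra.
Qed.

End HeightConstants.

Theorem lemma4p2 (R : realType) (X : Type) (h : X -> R)
    (deg : (X -> X) -> nat) (S : set (X -> X)) (P : X) :
  finite_set S ->
  (forall phi, S phi -> (2 <= deg phi)%N) ->
  forall phi, S phi ->
    phi @` (orbS S P `\` FPS h deg S P) `<=` orbS S P `\` FPS h deg S P.
Proof.
move=> _ deg_ge2 phi Sphi _ [Q [orbQ notFQ] <-].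
have hQ_gt : (2%:E * CS h deg S < (h Q)%:E)%E.
  by rewrite ltNge; apply/negP => hQ_le; apply: notFQ.
split; first exact: orbS_comp.
case=> _; apply/negP; rewrite -ltNge; apply: (lt_trans hQ_gt).
by rewrite lte_fin (@height_lt_image R X h deg S phi Q Sphi (deg_ge2 _ Sphi) hQ_gt).
Qed.
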